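(* Let $\mathbf{F}$ be an $S$-sorted CCC freely generated by a family of morphisms $\{f_i\}_{i\in I}$, let $p:\mathbf{F}\to\mathbf{C}$ be a morphism of $S$-sorted CCCs, and let $D$ be a cartesian closed natural system on $\mathbf{C}$, regarded as a natural system on $\mathbf{F}$ via $p$. Let $\tilde C^0_{\mathrm{BW}}(\mathbf{F};D)$ be the subgroup of $\ker\big(\delta:C^1_{\mathrm{BW}}(\mathbf{F};D)\to C^2_{\mathrm{BW}}(\mathbf{F};D)\big)$ consisting of those $\phi$ with $\phi(f_i)=0$ for all $i\in I$. Then \[ \tilde C^0_{\mathrm{BW}}(\mathbf{F};D)\oplus\mathrm{Der}^{\mathbf{CCC}_S}(\mathbf{F};D)\cong\ker\big(\delta:C^1_{\mathrm{BW}}(\mathbf{F};D)\to C^2_{\mathrm{BW}}(\mathbf{F};D)\big). \]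
   Context: $\mathsf{BiMag}_S$ is the set of formal expressions generated from the elements of $S$ and $1$ by $X\times Y$ and $Y^X$. An $S$-sorted CCC is a CCC with object set $\mathsf{BiMag}_S$ and a cartesian closed identity-on-objects functor $\iota$ from $\mathbf{CFam}_S$, the free CCC on object set $\mathsf{BiMag}_S$ with no generating morphisms (so projections $\pi_i$ and evaluations $\mathrm{ev}^Y_Z:Z^Y\times Y\to Z$ are specified); morphisms of $S$-sorted CCCs are functors $F$ with $F\circ\iota=\iota'$. The $S$-sorted CCC freely generated by $\{f_i:X_i\to Y_i\}$ has morphisms generated from the $f_i$, identities, $!_X$, $\pi_i$, $\mathrm{ev}$ by composition, pairing and currying $\lambda$ modulo the category, product and exponential laws. A natural system on a category is a functor $D$ from its category of factorizations (objects: morphisms $f$; morphisms $f\to g$: pairs $(a,b)$ with $bfa=g$) to $\mathbf{Ab}$; $D_f=D(f)$, $a_*=D(1,a):D_f\to D_{af}$, $a^*=D(a,1):D_g\to D_{ga}$; via $p$, $D$ gives the natural system $f\mapsto D_{p(f)}$ on $\mathbf{F}$. $D$ is cartesian if $D_f\to\prod_kD_{\pi_kf}$, $\xi\mapsto(\pi_{k*}\xi)$ is an isomorphism for every $f:X\to X_1\times\dots\times X_n$; cartesian closed if moreover for each $f:X\times Y\to Z$ the map $D_{\lambda f}\to D_f$, $\xi\mapsto\mathrm{ev}^Y_{Z*}\phi_{\lambda f}(\xi,0)$ is an isomorphism, where $\phi_g:D_g\times D_{\pi_2}\to D_{g\times1_Y}$ is $\pi_1^*\times1$ followed by the inverse of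 the cartesian isomorphism $D_{g\times1_Y}\to D_{g\pi_1}\times D_{\pi_2}$. $C^1_{\mathrm{BW}}(\mathbf{F};D)$ is the group of functions $\phi$ assigning to each morphism $\lambda$ of $\mathbf{F}$ an element $\phi(\lambda)\in D_\lambda$; $C^2_{\mathrm{BW}}$ assigns to each composable pair $(\lambda_1,\lambda_2)$ an element of $D_{\lambda_1\lambda_2}$, and $(\delta\phi)(\lambda_1,\lambda_2)=\lambda_{1*}\phi(\lambda_2)-\phi(\lambda_1\lambda_2)+\lambda_2^*\phi(\lambda_1)$. The trivial extension $D\rtimes\mathbf{C}$ has $\mathrm{Hom}(X,Y)=\coprod_{f:X\to Y}D_f$ with composition $\xi\circ\eta=f_*\eta+g^*\xi$, and is an $S$-sorted CCC with specified projections/evaluations the zero elements; $\mathrm{Der}^{\mathbf{CCC}_S}(\mathbf{F};D)$ is the group of morphisms $s:\mathbf{F}\to D\rtimes\mathbf{C}$ of $S$-sorted CCCs lifting $p$. *)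

From HB Require Import structures.
From mathcomp Require Import all_boot all_algebra.
Set Implicit Arguments.
Unset Strict Implicit.
Unset Printing Implicit Defensive.
Import GRing.Theory.
Local Open Scope ring_scope.

(* BExp Y Z denotes the exponential object Z^Y.                         *)
Inductive BiMag (S : Type) : Type :=
  | BSort of S
  | BOne
  | BProd of BiMag S & BiMag S
  | BExp of BiMag S & BiMag S.
Arguments BSort {S} s.
Arguments BOne {S}.
Arguments BProd {S} X Y.
Arguments BExp {S} Y Z.

Record SCCCData (S : Type) := {
  chom : BiMag S -> BiMag S -> Type;
  cid : forall X, chom X X;
  ccomp : forall X Y Z, chom Y Z -> chom X Y -> chom X Z;
  cbang : forall X, chom X BOne;
  cpr1 : forall X Y, chom (BProd X Y) X;
  cpr2 : forall X Y, chom (BProd X Y) Y;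
  cpair : forall X Y Z, chom X Y -> chom X Z -> chom X (BProd Y Z);
  cev : forall Y Z, chom (BProd (BExp Y Z) Y) Z;
  ccur : forall X Y Z, chom (BProd X Y) Z -> chom X (BExp Y Z) }.
Arguments chom {S} s X Y.
Arguments cid {S s} X.
Arguments ccomp {S s X Y Z} g f.
Arguments cbang {S s} X.
Arguments cpr1 {S s} X Y.
Arguments cpr2 {S s} X Y.
Arguments cpair {S s X Y Z} f g.
Arguments cev {S s} Y Z.
Arguments ccur {S s X Y Z} f.

Definition ctimes1 {S} {C : SCCCData S} {X W : BiMag S} (Y : BiMag S)
  (g : chom C X W) : chom C (BProd X Y) (BProd W Y) :=
  cpair (ccomp g (cpr1 X Y)) (cpr2 X Y).

Record SCCCAxioms S (C : SCCCData S) : Prop := {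
  ax_assoc : forall X Y Z W (h : chom C Z W) (g : chom C Y Z) (f : chom C X Y),
      ccomp h (ccomp g f) = ccomp (ccomp h g) f;
  ax_idl : forall X Y (f : chom C X Y), ccomp (cid Y) f = f;
  ax_idr : forall X Y (f : chom C X Y), ccomp f (cid X) = f;
  ax_bang : forall X (f : chom C X BOne), f = cbang X;
  ax_pr1 : forall X Y Z (f : chom C X Y) (g : chom C X Z),
      ccomp (cpr1 Y Z) (cpair f g) = f;
  ax_pr2 : forall X Y Z (f : chom C X Y) (g : chom C X Z),
      ccomp (cpr2 Y Z) (cpair f g) = g;
  ax_pair_eta : forall X Y Z (h : chom C X (BProd Y Z)),
      cpair (ccomp (cpr1 Y Z) h) (ccomp (cpr2 Y Z) h) = h;
  ax_ev : forall X Y Z (f : chom C (BProd X Y) Z),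
      ccomp (cev Y Z) (ctimes1 Y (ccur f)) = f;
  ax_cur_eta : forall X Y Z (h : chom C X (BExp Y Z)),
      ccur (ccomp (cev Y Z) (ctimes1 Y h)) = h }.

Record SCCC (S : Type) := { sdata :> SCCCData S; sax : SCCCAxioms sdata }.

Record SCCCMor S (F G : SCCC S) := {
  fmap : forall X Y, chom F X Y -> chom G X Y;
  fmap_id : forall X, fmap (cid X) = cid X;
  fmap_comp : forall X Y Z (g : chom F Y Z) (f : chom F X Y),
      fmap (ccomp g f) = ccomp (fmap g) (fmap f);
  fmap_bang : forall X, fmap (cbang X) = cbang X;
  fmap_pr1 : forall X Y, fmap (cpr1 X Y) = cpr1 X Y;
  fmap_pr2 : forall X Y, fmap (cpr2 X Y) = cpr2 X Y;
  fmap_ev : forall Y Z, fmap (cev Y Z) = cev Y Z;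
  fmap_pair : forall X Y Z (f : chom F X Y) (g : chom F X Z),
      fmap (cpair f g) = cpair (fmap f) (fmap g);
  fmap_cur : forall X Y Z (f : chom F (BProd X Y) Z),
      fmap (ccur f) = ccur (fmap f) }.
Arguments fmap {S F G} s {X Y} _.

Definition IsFreeOn S (F : SCCC S) (I : Type) (Xs Ys : I -> BiMag S)
  (gens : forall i, chom F (Xs i) (Ys i)) : Prop :=
  forall (G : SCCC S) (g : forall i, chom G (Xs i) (Ys i)),
    exists H : SCCCMor F G,
      (forall i, fmap H (gens i) = g i) /\
      (forall H' : SCCCMor F G, (forall i, fmap H' (gens i) = g i) ->
         forall X Y (u : chom F X Y), fmap H' u = fmap H u).

(* Natural systems: functors from the category of factorizations to Ab. *)
(* A morphism f -> g is a pair (a,b) with b o f o a = g; nact gives      *)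
(* D(a,b) : D_f -> D_g (the proof argument records b o f o a = g).       *)
Record NatSys S (C : SCCC S) := {
  ns : forall X Y, chom C X Y -> zmodType;
  nact : forall X Y X' Y' (f : chom C X Y) (g : chom C X' Y')
      (a : chom C X' X) (b : chom C Y Y'),
      ccomp b (ccomp f a) = g -> ns f -> ns g;
  nact_add : forall X Y X' Y' (f : chom C X Y) (g : chom C X' Y')
      (a : chom C X' X) (b : chom C Y Y') (H : ccomp b (ccomp f a) = g)
      (x y : ns f),
      nact H (x + y) = nact H x + nact H y;
  nact_id : forall X Y (f : chom C X Y)
      (H : ccomp (cid Y) (ccomp f (cid X)) = f) (x : ns f),
      nact H x = x;
  nact_comp : forall X Y X' Y' X'' Y'' (f : chom C X Y) (g : chom C X' Y')
      (h : chom C X'' Y'') (a : chom C X' X) (b : chom C Y Y')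
      (a' : chom C X'' X') (b' : chom C Y' Y'')
      (H1 : ccomp b (ccomp f a) = g) (H2 : ccomp b' (ccomp g a') = h)
      (H3 : ccomp (ccomp b' b) (ccomp f (ccomp a a')) = h) (x : ns f),
      nact H2 (nact H1 x) = nact H3 x }.
Arguments ns {S C} n {X Y} _.
Arguments nact {S C} n {X Y X' Y' f g a b} _ _.

Section NatSysOps.
Variables (S : Type) (C : SCCC S) (D : NatSys C).

Lemma push_proof X Y Z (f : chom C X Y) (a : chom C Y Z) (g : chom C X Z)
  (e : ccomp a f = g) : ccomp a (ccomp f (cid X)) = g.
Proof. by rewrite (ax_idr (sax C)). Qed.

Lemma pull_proof X Y Z (f : chom C Y Z) (b : chom C X Y) (g : chom C X Z)
  (e : ccomp f b = g) : ccomp (cid Z) (ccomp f b) = g.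
Proof. by rewrite (ax_idl (sax C)). Qed.

(* a_* = D(1,a), followed by the identification D_{a f} = D_g given e. *)
Definition pushE X Y Z (f : chom C X Y) (a : chom C Y Z) (g : chom C X Z)
  (e : ccomp a f = g) : ns D f -> ns D g :=
  nact D (push_proof e).
(* b^* = D(b,1), followed by the identification D_{f b} = D_g given e. *)
Definition pullE X Y Z (f : chom C Y Z) (b : chom C X Y) (g : chom C X Z)
  (e : ccomp f b = g) : ns D f -> ns D g :=
  nact D (pull_proof e).

Definition push X Y Z (a : chom C Y Z) (f : chom C X Y) (x : ns D f)
  : ns D (ccomp a f) := pushE (erefl (ccomp a f)) x.
Definition pull X Y Z (b : chom C X Y) (f : chom C Y Z) (x : ns D f)
  : ns D (ccomp f b) := pullE (erefl (ccomp f b)) x.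

(* D is cartesian: D_f = 0 for f : X -> 1, and for f : X -> Y1 x Y2 the *)
(* map xi |-> (pi1_* xi, pi2_* xi) is an isomorphism (bijective; it is   *)
(* additive by nact_add).                                                *)
Definition IsCartesian : Prop :=
  (forall X (f : chom C X BOne) (x : ns D f), x = 0) /\
  (forall X Y1 Y2 (f : chom C X (BProd Y1 Y2)),
     bijective (fun x : ns D f => (push (cpr1 Y1 Y2) x, push (cpr2 Y1 Y2) x))).

(* phiRel g xi eta zeta  <->  zeta = phi_g(xi, eta), i.e. zeta in D_{g x 1} *)
(* is the element whose cartesian components are (pi1^* xi, eta).          *)
Definition phiRel X W (Y : BiMag S) (g : chom C X W) (xi : ns D g)
  (eta : ns D (cpr2 X Y)) (zeta : ns D (ctimes1 Y g)) : Prop :=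
  pushE (ax_pr1 (sax C) (ccomp g (cpr1 X Y)) (cpr2 X Y)) zeta
    = pull (cpr1 X Y) xi /\
  pushE (ax_pr2 (sax C) (ccomp g (cpr1 X Y)) (cpr2 X Y)) zeta = eta.

(* Cartesian closed: moreover, for f : X x Y -> Z, the map                *)
(* D_{lambda f} -> D_f, xi |-> ev_* phi_{lambda f}(xi, 0) is bijective.   *)
Definition IsCartClosed : Prop :=
  IsCartesian /\
  forall X Y Z (f : chom C (BProd X Y) Z) (Lam : ns D (ccur f) -> ns D f),
    (forall xi, exists zeta : ns D (ctimes1 Y (ccur f)),
        phiRel xi 0 zeta /\ pushE (ax_ev (sax C) f) zeta = Lam xi) ->
    bijective Lam.

End NatSysOps.

Section BW.
Variables (S : Type) (F C : SCCC S) (p : SCCCMor F C) (D : NatSys C).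

Definition C1 : Type := forall X Y (u : chom F X Y), ns D (fmap p u).

Definition C1add (phi psi : C1) : C1 := fun X Y u => phi X Y u + psi X Y u.

Lemma pcomp_eq X Y Z (l1 : chom F Y Z) (l2 : chom F X Y) :
  ccomp (fmap p l1) (fmap p l2) = fmap p (ccomp l1 l2).
Proof. by rewrite (fmap_comp p). Qed.

Definition IsCocycle (phi : C1) : Prop :=
  forall X Y Z (l1 : chom F Y Z) (l2 : chom F X Y),
    pushE (pcomp_eq l1 l2) (phi X Y l2) - phi X Z (ccomp l1 l2)
      + pullE (pcomp_eq l1 l2) (phi Y Z l1) = 0.

Definition IsZtilde (I : Type) (Xs Ys : I -> BiMag S)
  (gens : forall i, chom F (Xs i) (Ys i)) (phi : C1) : Prop :=
  IsCocycle phi /\ forall i, phi _ _ (gens i) = 0.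

Lemma pair1_eq X Y Z (u : chom F X Y) (v : chom F X Z) :
  ccomp (cpr1 Y Z) (fmap p (cpair u v)) = fmap p u.
Proof. by rewrite (fmap_pair p) (ax_pr1 (sax C)). Qed.

Lemma pair2_eq X Y Z (u : chom F X Y) (v : chom F X Z) :
  ccomp (cpr2 Y Z) (fmap p (cpair u v)) = fmap p v.
Proof. by rewrite (fmap_pair p) (ax_pr2 (sax C)). Qed.

Lemma cur_eq X Y Z (u : chom F (BProd X Y) Z) :
  ccomp (cev Y Z) (ctimes1 Y (fmap p (ccur u))) = fmap p u.
Proof. by rewrite (fmap_cur p) (ax_ev (sax C)). Qed.

(* Der^{CCC_S}(F;D): a morphism s : F -> D x| C of S-sorted CCCs lifting *)
(* p is s(u) = (p(u), d(u)) with d in C^1; the conditions below say that  *)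
(* s preserves identities, composition (xi o eta = f_* eta + g^* xi), the *)
(* specified 1, projections, evaluations (zero elements), pairing and     *)
(* currying of the trivial extension D x| C.                              *)
Record IsDer (d : C1) : Prop := {
  der_id : forall X, d X X (cid X) = 0;
  der_comp : forall X Y Z (l1 : chom F Y Z) (l2 : chom F X Y),
      d X Z (ccomp l1 l2)
        = pushE (pcomp_eq l1 l2) (d X Y l2) + pullE (pcomp_eq l1 l2) (d Y Z l1);
  der_bang : forall X, d X BOne (cbang X) = 0;
  der_pr1 : forall X Y, d _ _ (cpr1 X Y) = 0;
  der_pr2 : forall X Y, d _ _ (cpr2 X Y) = 0;
  der_ev : forall Y Z, d _ _ (cev Y Z) = 0;
  der_pair : forall X Y Z (u : chom F X Y) (v : chom F X Z),
      pushE (pair1_eq u v) (d _ _ (cpair u v)) = d _ _ u /\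
      pushE (pair2_eq u v) (d _ _ (cpair u v)) = d _ _ v;
  der_cur : forall X Y Z (u : chom F (BProd X Y) Z),
      exists zeta : ns D (ctimes1 Y (fmap p (ccur u))),
        phiRel (d _ _ (ccur u)) 0 zeta /\
        pushE (cur_eq u) zeta = d _ _ u }.

End BW.

Definition IsoSumOf (T : Type) (add : T -> T -> T) (P Q R : T -> Prop) : Prop :=
  exists Phi : T -> T -> T,
    [/\ forall a b, P a -> Q b -> R (Phi a b),
        forall a b a' b', P a -> Q b -> P a' -> Q b' ->
          Phi (add a a') (add b b') = add (Phi a b) (Phi a' b'),
        forall a b a' b', P a -> Q b -> P a' -> Q b' ->
          Phi a b = Phi a' b' -> a = a' /\ b = b'
      & forall z, R z -> exists a b, [/\ P a, Q b & Phi a b = z]].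

(* A derivation of F with values in D is the same thing as a morphism of
   S-sorted CCCs F -> D x| C lifting p, and D x| C is an S-sorted CCC precisely
   because D is cartesian closed: pairing and currying in D x| C invert the
   cartesian and currying isomorphisms of D.  Freeness of F therefore says that
   a derivation is uniquely determined by, and may be prescribed arbitrarily on,
   the generators f_i.  Since the Leibniz rule says that derivations are
   cocycles, every cocycle z splits uniquely as (z - d) + d, where d is the
   derivation agreeing with z on the generators. *)

From mathcomp Require Import ssreflect ssrfun ssrbool ssralg.
From Stdlib Require Import ProofIrrelevance ClassicalEpsilon FunctionalExtensionality.
Set Implicit Arguments.
Unset Strict Implicit.
Unset Printing Implicit Defensive.
Import GRing.Theory.
Local Open Scope ring_scope.

Lemma bijective_cancel (A B : Type) (f : A -> B) :
  bijective f -> exists g, cancel f g /\ cancel g f.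
Proof. by case=> g fK gK; exists g. Qed.

Definition bij_inv (A B : Type) (f : A -> B) (bf : bijective f) : B -> A :=
  proj1_sig (constructive_indefinite_description _ (bijective_cancel bf)).

Lemma bij_invK (A B : Type) (f : A -> B) (bf : bijective f) : cancel f (bij_inv bf).
Proof. by rewrite /bij_inv; case: constructive_indefinite_description => ? []. Qed.

Lemma bij_invVK (A B : Type) (f : A -> B) (bf : bijective f) : cancel (bij_inv bf) f.
Proof. by rewrite /bij_inv; case: constructive_indefinite_description => ? []. Qed.

Section NatSysAction.
Variables (S : Type) (C : SCCC S) (D : NatSys C).

Lemma cassoc X Y Z W (h : chom C Z W) (g : chom C Y Z) (f : chom C X Y) :
  ccomp h (ccomp g f) = ccomp (ccomp h g) f.
Proof. exact: (ax_assoc (sax C)). Qed.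

Lemma cidl X Y (f : chom C X Y) : ccomp (cid Y) f = f.
Proof. exact: (ax_idl (sax C)). Qed.

Lemma cidr X Y (f : chom C X Y) : ccomp f (cid X) = f.
Proof. exact: (ax_idr (sax C)). Qed.

Lemma nact_ext X Y X' Y' (f : chom C X Y) (g : chom C X' Y')
    (a a' : chom C X' X) (b b' : chom C Y Y')
    (H : ccomp b (ccomp f a) = g) (H' : ccomp b' (ccomp f a') = g) (x : ns D f) :
  a = a' -> b = b' -> nact D H x = nact D H' x.
Proof. by move=> ea eb; subst a' b'; rewrite (proof_irrelevance _ H H'). Qed.

Lemma factor_comp X Y X' Y' X'' Y'' (f : chom C X Y) (g : chom C X' Y')
    (h : chom C X'' Y'') (a : chom C X' X) (b : chom C Y Y')
    (a' : chom C X'' X') (b' : chom C Y' Y'')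
    (H1 : ccomp b (ccomp f a) = g) (H2 : ccomp b' (ccomp g a') = h) :
  ccomp (ccomp b' b) (ccomp f (ccomp a a')) = h.
Proof. by rewrite -H2 -H1 !cassoc. Qed.

Lemma nactA X Y X' Y' X'' Y'' (f : chom C X Y) (g : chom C X' Y')
    (h : chom C X'' Y'') (a : chom C X' X) (b : chom C Y Y')
    (a' : chom C X'' X') (b' : chom C Y' Y'')
    (H1 : ccomp b (ccomp f a) = g) (H2 : ccomp b' (ccomp g a') = h) x :
  nact D H2 (nact D H1 x) = nact D (factor_comp H1 H2) x.
Proof. exact: nact_comp. Qed.

Lemma nact0 X Y X' Y' (f : chom C X Y) (g : chom C X' Y')
    (a : chom C X' X) (b : chom C Y Y') (H : ccomp b (ccomp f a) = g) :
  nact D H 0 = 0.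
Proof. by apply: (addrI (nact D H 0)); rewrite -nact_add !addr0. Qed.

Lemma nactN X Y X' Y' (f : chom C X Y) (g : chom C X' Y')
    (a : chom C X' X) (b : chom C Y Y') (H : ccomp b (ccomp f a) = g) x :
  nact D H (- x) = - nact D H x.
Proof. by apply: (addrI (nact D H x)); rewrite -nact_add !subrr nact0. Qed.

Lemma ncast_proof X Y (f g : chom C X Y) : f = g -> ccomp (cid Y) (ccomp f (cid X)) = g.
Proof. by rewrite cidl cidr. Qed.

Definition ncast X Y (f g : chom C X Y) (E : f = g) : ns D f -> ns D g :=
  nact D (ncast_proof E).

Lemma nact_idE X Y (f : chom C X Y) (a : chom C X X) (b : chom C Y Y)
    (H : ccomp b (ccomp f a) = f) x :
  a = cid X -> b = cid Y -> nact D H x = x.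
Proof. by move=> ea eb; rewrite (nact_ext _ (ncast_proof (erefl f))) ?nact_id. Qed.

End NatSysAction.

Ltac nact_norm := rewrite ?/ncast ?/push ?/pull ?/pushE ?/pullE;
  repeat progress rewrite ?nact_add ?nactN ?nact0 ?nactA.
Ltac nact_congr := apply: nact_ext; rewrite ?cidl ?cidr ?cassoc //.

Section Cast.
Variables (S : Type) (C : SCCC S) (D : NatSys C).

Lemma ncast_id X Y (f : chom C X Y) (E : f = f) (x : ns D f) : ncast E x = x.
Proof. exact: nact_id. Qed.

Lemma ncast_irr X Y (f g : chom C X Y) (E E' : f = g) (x : ns D f) :
  ncast E x = ncast E' x.
Proof. by rewrite (proof_irrelevance _ E E'). Qed.

Lemma ncast_trans X Y (f g h : chom C X Y) (E1 : f = g) (E2 : g = h) (x : ns D f) :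
  ncast E2 (ncast E1 x) = ncast (etrans E1 E2) x.
Proof. by nact_norm; nact_congr. Qed.

Lemma ncast0 X Y (f g : chom C X Y) (E : f = g) : ncast E (0 : ns D f) = 0.
Proof. exact: nact0. Qed.

Lemma ncast_inj X Y (f g : chom C X Y) (E : f = g) : injective (@ncast _ _ D _ _ _ _ E).
Proof.
by move=> x y /(congr1 (ncast (esym E))); rewrite !ncast_trans !ncast_id.
Qed.

Lemma ncast_moveR X Y (f g : chom C X Y) (E : f = g) (x : ns D f) y :
  x = ncast (esym E) y -> ncast E x = y.
Proof. by move=> ->; rewrite ncast_trans ncast_id. Qed.

Lemma pushE_ncast X Y Z (f : chom C X Y) (a : chom C Y Z) (g : chom C X Z)
    (e : ccomp a f = g) (x : ns D f) :
  pushE e x = ncast e (push a x).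
Proof. by nact_norm; nact_congr. Qed.

Lemma push_ncast X Y Z (a : chom C Y Z) (f g : chom C X Y) (E : f = g) (x : ns D f) :
  push a (ncast E x) = ncast (f_equal (ccomp a) E) (push a x).
Proof. by nact_norm; nact_congr. Qed.

Lemma push0 X Y Z (a : chom C Y Z) (f : chom C X Y) : push a (0 : ns D f) = 0.
Proof. exact: nact0. Qed.

Lemma pull0 X Y Z (b : chom C X Y) (f : chom C Y Z) : pull b (0 : ns D f) = 0.
Proof. exact: nact0. Qed.

End Cast.

Section CartesianClosed.
Variables (S : Type) (C : SCCC S) (D : NatSys C) (HD : IsCartClosed D).

Lemma ns_one_eq0 X (f : chom C X BOne) (x : ns D f) : x = 0.
Proof. exact: HD.1.1. Qed.

Definition cart_glue X Y1 Y2 (h : chom C X (BProd Y1 Y2)) :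
    ns D (ccomp (cpr1 Y1 Y2) h) * ns D (ccomp (cpr2 Y1 Y2) h) -> ns D h :=
  bij_inv (HD.1.2 _ _ _ h).
Arguments cart_glue [X Y1 Y2] h.

Lemma push_pr1_glue X Y1 Y2 (h : chom C X (BProd Y1 Y2)) x1 x2 :
  push (cpr1 Y1 Y2) (cart_glue h (x1, x2)) = x1.
Proof. by have [] := bij_invVK (HD.1.2 _ _ _ h) (x1, x2). Qed.

Lemma push_pr2_glue X Y1 Y2 (h : chom C X (BProd Y1 Y2)) x1 x2 :
  push (cpr2 Y1 Y2) (cart_glue h (x1, x2)) = x2.
Proof. by have [] := bij_invVK (HD.1.2 _ _ _ h) (x1, x2). Qed.

Lemma cart_inj X Y1 Y2 (h : chom C X (BProd Y1 Y2)) (x y : ns D h) :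
  push (cpr1 Y1 Y2) x = push (cpr1 Y1 Y2) y ->
  push (cpr2 Y1 Y2) x = push (cpr2 Y1 Y2) y -> x = y.
Proof.
move=> e1 e2; rewrite -(bij_invK (HD.1.2 _ _ _ h) x) -(bij_invK (HD.1.2 _ _ _ h) y).
by rewrite /= e1 e2.
Qed.

Definition phi0 X W Y (g : chom C X W) (xi : ns D g) : ns D (ctimes1 Y g) :=
  cart_glue (ctimes1 Y g)
    (ncast (esym (ax_pr1 (sax C) (ccomp g (cpr1 X Y)) (cpr2 X Y))) (pull (cpr1 X Y) xi),
     0).

Lemma phiRel_phi0 X W Y (g : chom C X W) (xi : ns D g) : phiRel xi 0 (phi0 Y xi).
Proof.
by split; rewrite pushE_ncast /phi0 ?push_pr1_glue ?push_pr2_glue ?ncast_trans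
  ?ncast_id ?ncast0.
Qed.

Lemma phiRel_uniq X W Y (g : chom C X W) (xi : ns D g) eta z z' :
  phiRel (Y := Y) xi eta z -> phiRel xi eta z' -> z = z'.
Proof.
rewrite /phiRel !pushE_ncast => -[e1 e2] [e1' e2'].
by apply: cart_inj; [move: e1; rewrite -e1' | move: e2; rewrite -e2'] => /ncast_inj.
Qed.

Lemma phi0_ncast X W Y (g g' : chom C X W) (E : g = g') (xi : ns D g) :
  phi0 Y (ncast E xi) = ncast (f_equal (ctimes1 Y) E) (phi0 Y xi).
Proof. by case: g' / E; rewrite !ncast_id. Qed.

Definition uncurry_ns X Y Z (f : chom C (BProd X Y) Z) (xi : ns D (ccur f)) : ns D f :=
  pushE (ax_ev (sax C) f) (phi0 Y xi).
Arguments uncurry_ns [X Y Z] f.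

Lemma uncurry_ns_bij X Y Z (f : chom C (BProd X Y) Z) : bijective (uncurry_ns f).
Proof. by apply: HD.2 => xi; exists (phi0 Y xi); split; first exact: phiRel_phi0. Qed.

Definition curry_ns X Y Z (f : chom C (BProd X Y) Z) : ns D f -> ns D (ccur f) :=
  bij_inv (uncurry_ns_bij f).
Arguments curry_ns [X Y Z] f.

Lemma curry_nsK X Y Z (f : chom C (BProd X Y) Z) : cancel (curry_ns f) (uncurry_ns f).
Proof. exact: bij_invVK. Qed.

Lemma uncurry_ns_inj X Y Z (f : chom C (BProd X Y) Z) : injective (uncurry_ns f).
Proof. exact: can_inj (bij_invK (uncurry_ns_bij f)). Qed.

End CartesianClosed.

Arguments cart_glue {S C D} HD [X Y1 Y2] h _.
Arguments uncurry_ns {S C D} HD [X Y Z] f _.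
Arguments curry_ns {S C D} HD [X Y Z] f _.

Section TrivialExtension.
Variables (S : Type) (C : SCCC S) (D : NatSys C) (HD : IsCartClosed D).

Definition ext_hom X Y := {f : chom C X Y & ns D f}.

Definition extm X Y (f : chom C X Y) (x : ns D f) : ext_hom X Y := existT _ f x.
Arguments extm [X Y] f x.

Definition trivext_data : SCCCData S := {|
  chom := ext_hom;
  cid := fun X => extm (cid X) 0;
  ccomp := fun X Y Z (g : ext_hom Y Z) (f : ext_hom X Y) =>
    extm (ccomp (projT1 g) (projT1 f))
      (push (projT1 g) (projT2 f) + pull (projT1 f) (projT2 g));
  cbang := fun X => extm (cbang X) 0;
  cpr1 := fun X Y => extm (cpr1 X Y) 0;
  cpr2 := fun X Y => extm (cpr2 X Y) 0;
  cpair := fun X Y Z (f : ext_hom X Y) (g : ext_hom X Z) =>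
    extm (cpair (projT1 f) (projT1 g))
      (cart_glue HD (cpair (projT1 f) (projT1 g))
         (ncast (esym (ax_pr1 (sax C) (projT1 f) (projT1 g))) (projT2 f),
          ncast (esym (ax_pr2 (sax C) (projT1 f) (projT1 g))) (projT2 g)));
  cev := fun Y Z => extm (cev Y Z) 0;
  ccur := fun X Y Z (f : ext_hom (BProd X Y) Z) =>
    extm (ccur (projT1 f)) (curry_ns HD (projT1 f) (projT2 f)) |}.

Lemma extm_eq X Y (f g : chom C X Y) (x : ns D f) (y : ns D g) (E : f = g) :
  ncast E x = y -> extm f x = extm g y.
Proof. by case: g / E y => y; rewrite ncast_id => ->. Qed.

Lemma trivext_axioms : SCCCAxioms trivext_data.
Proof.
split.
- move=> X Y Z W [h xh] [g xg] [f xf] /=; apply: (extm_eq (E := cassoc h g f)).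
  by nact_norm; rewrite addrA; congr (_ + _ + _); nact_congr.
- move=> X Y [f xf] /=; apply: (extm_eq (E := cidl f)); rewrite pull0 addr0.
  by nact_norm; apply: nact_idE; rewrite ?cidl ?cidr.
- move=> X Y [f xf] /=; apply: (extm_eq (E := cidr f)); rewrite push0 add0r.
  by nact_norm; apply: nact_idE; rewrite ?cidl ?cidr.
- move=> X [f xf] /=; apply: (extm_eq (E := ax_bang (sax C) f)); exact: ns_one_eq0.
- move=> X Y Z [f xf] [g xg] /=; apply: (extm_eq (E := ax_pr1 (sax C) f g)).
  by rewrite pull0 addr0 push_pr1_glue ncast_trans ncast_id.
- move=> X Y Z [f xf] [g xg] /=; apply: (extm_eq (E := ax_pr2 (sax C) f g)).
  by rewrite pull0 addr0 push_pr2_glue ncast_trans ncast_id.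
- move=> X Y Z [k xk] /=; apply: (extm_eq (E := ax_pair_eta (sax C) k)).
  by apply: (cart_inj HD);
    rewrite push_ncast ?push_pr1_glue ?push_pr2_glue ?pull0 ?addr0 ncast_trans ncast_id.
- move=> X Y Z [f xf]; rewrite /ctimes1 /=; apply: (extm_eq (E := ax_ev (sax C) f)).
  rewrite push0 add0r ncast0 pull0 addr0.
  rewrite -{2}(curry_nsK HD xf) /uncurry_ns /phi0 pushE_ncast.
  exact: ncast_irr.
- move=> X Y Z [k xk]; rewrite /ctimes1 /=.
  apply: (extm_eq (E := ax_cur_eta (sax C) k)); apply: ncast_moveR.
  rewrite push0 add0r ncast0 pull0 addr0.
  apply: (@uncurry_ns_inj _ _ _ HD _ _ _ (ccomp (cev Y Z) (ctimes1 Y k))).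
  rewrite curry_nsK /uncurry_ns phi0_ncast /phi0.
  by nact_norm; nact_congr.
Qed.

Definition trivext : SCCC S := Build_SCCC trivext_axioms.

Lemma projT2_ncast X Y (s s' : ext_hom X Y) (K : projT1 s = projT1 s') :
  s = s' -> ncast K (projT2 s) = projT2 s'.
Proof. by move=> E; case: s' / E K => K; rewrite ncast_id. Qed.

Lemma extm_inj X Y (f : chom C X Y) (x y : ns D f) : extm f x = extm f y -> x = y.
Proof. by move=> /(@projT2_ncast _ _ (extm f x) (extm f y) erefl); rewrite ncast_id. Qed.

Definition trivext_proj : SCCCMor trivext C.
Proof.
by refine (@Build_SCCCMor _ trivext C (fun X Y s => projT1 s) _ _ _ _ _ _ _ _).
Defined.

End TrivialExtension.

Arguments extm {S C D X Y} f x.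

Definition scccmor_comp S (F G H : SCCC S) (M : SCCCMor G H) (N : SCCCMor F G) :
  SCCCMor F H.
Proof.
refine (@Build_SCCCMor _ F H (fun X Y u => fmap M (fmap N u)) _ _ _ _ _ _ _ _).
all: by move=> *; rewrite ?fmap_id ?fmap_comp ?fmap_bang ?fmap_pr1 ?fmap_pr2
  ?fmap_ev ?fmap_pair ?fmap_cur.
Defined.

Section DerivationsAsLifts.
Variables (S : Type) (F C : SCCC S) (p : SCCCMor F C) (D : NatSys C)
  (HD : IsCartClosed D).

Definition der_lift (d : C1 p D) (Hd : IsDer d) : SCCCMor F (trivext HD).
Proof.
refine (@Build_SCCCMor _ F (trivext HD)
  (fun X Y u => extm (fmap p u) (d X Y u)) _ _ _ _ _ _ _ _).
- by move=> X; apply: (extm_eq (E := fmap_id p X)); rewrite (der_id Hd) ncast0.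
- move=> X Y Z g f; apply: (extm_eq (E := fmap_comp p g f)); rewrite (der_comp Hd).
  by nact_norm; congr (_ + _); nact_congr.
- by move=> X; apply: (extm_eq (E := fmap_bang p X)); rewrite (der_bang Hd) ncast0.
- by move=> X Y; apply: (extm_eq (E := fmap_pr1 p X Y)); rewrite (der_pr1 Hd) ncast0.
- by move=> X Y; apply: (extm_eq (E := fmap_pr2 p X Y)); rewrite (der_pr2 Hd) ncast0.
- by move=> X Y; apply: (extm_eq (E := fmap_ev p X Y)); rewrite (der_ev Hd) ncast0.
- move=> X Y Z f g; apply: (extm_eq (E := fmap_pair p f g)).
  have [d1 d2] := der_pair Hd f g.
  apply: (cart_inj HD); rewrite push_ncast ?push_pr1_glue ?push_pr2_glue.
    by rewrite -d1 pushE_ncast ncast_trans; apply: ncast_irr.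
  by rewrite -d2 pushE_ncast ncast_trans; apply: ncast_irr.
- move=> X Y Z f; apply: (extm_eq (E := fmap_cur p f)).
  apply: (@uncurry_ns_inj _ _ _ HD _ _ _ (fmap p f)); rewrite curry_nsK.
  have [z [zP <-]] := der_cur Hd f.
  rewrite (phiRel_uniq HD zP (phiRel_phi0 HD Y (d _ _ (ccur f)))).
  by rewrite /uncurry_ns phi0_ncast !pushE_ncast push_ncast ncast_trans; apply: ncast_irr.
Defined.

Section LiftToDerivation.
Variables (H : SCCCMor F (trivext HD))
  (Hp : forall X Y (u : chom F X Y), projT1 (fmap H u) = fmap p u).

Definition lift_der : C1 p D := fun X Y u => ncast (Hp u) (projT2 (fmap H u)).

Lemma lift_derE X Y (u : chom F X Y) (s : chom (trivext HD) X Y) (E : fmap H u = s)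
    (K : projT1 s = fmap p u) :
  lift_der u = ncast K (projT2 s).
Proof. by rewrite /lift_der; case: s / E K => K; apply: ncast_irr. Qed.

Lemma lift_der_is_der : IsDer lift_der.
Proof.
split.
- by move=> X; rewrite (lift_derE (fmap_id H X) (esym (fmap_id p X))) ncast0.
- move=> X Y Z l1 l2.
  have K : ccomp (projT1 (fmap H l1)) (projT1 (fmap H l2)) = fmap p (ccomp l1 l2).
    by rewrite !Hp fmap_comp.
  rewrite (lift_derE (fmap_comp H l1 l2) K) /lift_der /=.
  by nact_norm; congr (_ + _); apply: nact_ext; rewrite ?Hp ?cidl ?cidr.
- by move=> X; rewrite (lift_derE (fmap_bang H X) (esym (fmap_bang p X))) ncast0.
- by move=> X Y; rewrite (lift_derE (fmap_pr1 H X Y) (esym (fmap_pr1 p X Y))) ncast0.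
- by move=> X Y; rewrite (lift_derE (fmap_pr2 H X Y) (esym (fmap_pr2 p X Y))) ncast0.
- by move=> X Y; rewrite (lift_derE (fmap_ev H X Y) (esym (fmap_ev p X Y))) ncast0.
- move=> X Y Z u v.
  have K : cpair (projT1 (fmap H u)) (projT1 (fmap H v)) = fmap p (cpair u v).
    by rewrite !Hp fmap_pair.
  rewrite (lift_derE (fmap_pair H u v) K) /= !pushE_ncast !push_ncast.
  by rewrite push_pr1_glue push_pr2_glue !ncast_trans; split; apply: ncast_irr.
- move=> X Y Z u.
  exists (phi0 HD Y (lift_der (ccur u))); split; first exact: phiRel_phi0.
  have K : ccur (projT1 (fmap H u)) = fmap p (ccur u) by rewrite !Hp fmap_cur.
  rewrite (lift_derE (fmap_cur H u) K) /=.
  rewrite -[RHS](congr1 (ncast (Hp u)) (curry_nsK HD (projT2 (fmap H u)))).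
  rewrite /uncurry_ns phi0_ncast !pushE_ncast push_ncast !ncast_trans.
  exact: ncast_irr.
Qed.

End LiftToDerivation.

End DerivationsAsLifts.

Section FreeDerivations.
Variables (S : Type) (F C : SCCC S) (I : Type) (Xs Ys : I -> BiMag S)
  (gens : forall i, chom F (Xs i) (Ys i)) (Hfree : IsFreeOn gens)
  (p : SCCCMor F C) (D : NatSys C) (HD : IsCartClosed D).

Lemma free_mor_eq (G : SCCC S) (H1 H2 : SCCCMor F G) :
    (forall i, fmap H1 (gens i) = fmap H2 (gens i)) ->
  forall X Y (u : chom F X Y), fmap H1 u = fmap H2 u.
Proof.
move=> E X Y u; have [H0 [_ uniq]] := Hfree (fun i => fmap H1 (gens i)).
by rewrite (uniq H1 (fun _ => erefl)) (uniq H2 (fun i => esym (E i))).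
Qed.

Lemma der_eq_on_gens (d1 d2 : C1 p D) : IsDer d1 -> IsDer d2 ->
    (forall i, d1 _ _ (gens i) = d2 _ _ (gens i)) ->
  forall X Y (u : chom F X Y), d1 X Y u = d2 X Y u.
Proof.
move=> D1 D2 E X Y u; apply: extm_inj.
by apply: (free_mor_eq (H1 := der_lift HD D1) (H2 := der_lift HD D2)) => i /=; rewrite E.
Qed.

Lemma der_exists (z : forall i, ns D (fmap p (gens i))) :
  exists d : C1 p D, IsDer d /\ forall i, d _ _ (gens i) = z i.
Proof.
have [H [Hgens _]] := Hfree (G := trivext HD) (fun i => extm (fmap p (gens i)) (z i)).
have Hp : forall X Y (u : chom F X Y), projT1 (fmap H u) = fmap p u.
  by apply: (free_mor_eq (H1 := scccmor_comp (trivext_proj HD) H)) => i /=; rewrite Hgens.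
exists (lift_der Hp); split; first exact: lift_der_is_der.
by move=> i; rewrite (lift_derE Hp (Hgens i) erefl) ncast_id.
Qed.

End FreeDerivations.

Section Cocycles.
Variables (S : Type) (F C : SCCC S) (p : SCCCMor F C) (D : NatSys C).

Lemma C1_ext (phi psi : C1 p D) : (forall X Y u, phi X Y u = psi X Y u) -> phi = psi.
Proof.
move=> E; do 3 apply: functional_extensionality_dep => ?; exact: E.
Qed.

Definition C1opp (phi : C1 p D) : C1 p D := fun X Y u => - phi X Y u.

Lemma der_is_cocycle (d : C1 p D) : IsDer d -> IsCocycle d.
Proof. by move=> Hd X Y Z l1 l2; rewrite (der_comp Hd) opprD addrA subrr add0r addNr. Qed.

Lemma cocycle_add (phi psi : C1 p D) :
  IsCocycle phi -> IsCocycle psi -> IsCocycle (C1add phi psi).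
Proof.
move=> cphi cpsi X Y Z l1 l2; have := cphi X Y Z l1 l2; have := cpsi X Y Z l1 l2.
rewrite /C1add /pushE /pullE !nact_add opprD (addrACA (nact _ _ _)) => E1 E2.
by rewrite (addrACA (_ - _)) E1 E2 addr0.
Qed.

Lemma cocycle_opp (phi : C1 p D) : IsCocycle phi -> IsCocycle (C1opp phi).
Proof.
move=> cphi X Y Z l1 l2; have := cphi X Y Z l1 l2.
rewrite /C1opp /pushE /pullE !nactN => E.
by apply: oppr_inj; rewrite oppr0 !opprD !opprK.
Qed.

End Cocycles.

Theorem mainTheorem6 (S : Type) (F C : SCCC S) (I : Type) (Xs Ys : I -> BiMag S)
  (gens : forall i, chom F (Xs i) (Ys i)) (Hfree : IsFreeOn gens)
  (p : SCCCMor F C) (D : NatSys C) (HD : IsCartClosed D) :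
  IsoSumOf (@C1add S F C p D)
    (IsZtilde (p := p) (D := D) gens) (IsDer (p := p) (D := D))
    (IsCocycle (p := p) (D := D)).
Proof.
exists (@C1add S F C p D); split.
- by move=> a b [ca _] db; apply: cocycle_add ca (der_is_cocycle db).
- by move=> a b a' b' _ _ _ _; apply: C1_ext => X Y u; rewrite /C1add addrACA.
- move=> a b a' b' [_ a0] db [_ a'0] db' E.
  have Eu X Y u : a X Y u + b X Y u = a' X Y u + b' X Y u :=
    congr1 (fun phi : C1 p D => phi X Y u) E.
  have Eb X Y u : b X Y u = b' X Y u.
    by apply: (der_eq_on_gens Hfree HD db db') => i; have := Eu _ _ (gens i);
      rewrite a0 a'0 !add0r.
  split; apply: C1_ext => X Y u; last exact: Eb.
  by apply: (addIr (b X Y u)); rewrite {2}Eb Eu.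
- move=> z cz; have [d [dd dz]] := der_exists Hfree HD (fun i => z _ _ (gens i)).
  exists (C1add z (C1opp d)), d; split => //.
  + split; first exact: cocycle_add cz (cocycle_opp (der_is_cocycle dd)).
    by move=> i; rewrite /C1add /C1opp dz subrr.
  + by apply: C1_ext => X Y u; rewrite /C1add /C1opp subrK.
Qed.
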